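(* Let $f$ be the staircase function with descriptor $(h,o,\delta,\ell,L,V)$, and for $i\in[h]$ let $\Lambda_i$ be the schema partition of $\mathfrak B_\ell$ whose fixed positions are exactly the entries of rows $1,\dots,i$ of $L$ (so $\Lambda_i$ consists of $2^{oi}$ schemata, one of which is stage $i$ of $f$). Then for every $i\in[h]$, $$\sum_{\xi\in\Lambda_i,\ \xi\neq \text{stage } i} S(\xi) = -i\delta.$$
   Context: For a positive integer $n$, $[n]=\{1,\dots,n\}$ and $\mathfrak B_\ell$ is the set of binary strings of length $\ell$; $g_j$ denotes the $j$-th bit of $g$. For a $k$-tuple $x=(x_1,\dots,x_k)$ of integers in $[\ell]$ and $g\in\mathfrak B_\ell$, $\Xi_x(g)$ is the string $g_{x_1}g_{x_2}\cdots g_{x_k}$. For a matrix $M$, $M_{i:}$ is its $i$-th row (as a tuple). A schema is a set of the form $\{g\in\mathfrak B_\ell: g_j=c_j \text{ for all } j\in D\}$ for some $D\subseteq[\ell]$ and bits $c_j$; the schema partition with fixed positions $D$ is the set of all $2^{|D|}$ such schemata. A staircase function descriptor is a tuple $(h,o,\delta,\ell,L,V)$ where $h,o,\ell$ are positive integers with $ho\le \ell$, $\delta>0$ is real, $V$ is an $h\times o$ matrix of bits, and $L$ is an $h\times o$ matrix whose $ho$ entries are pairwise distinct integers in $[\ell]$. The staircase function $f$ with this descriptor is the stochastic function on $\mathfrak B_\ell$ computed as follows on input $g$: draw $x\sim\mathcal N(0,1)$ (independently at each evaluation); for $i=1,\dots,h$ in order: if $\Xi_{L_{i:}}(g)=V_{i1}\cdots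 V_{io}$ then set $x\leftarrow x+\delta$, otherwise set $x\leftarrow x-\delta/(2^o-1)$ and stop the loop; return $x$. Step $i$ of $f$ is the schema $\{g\in\mathfrak B_\ell:\Xi_{L_{i:}}(g)=V_{i1}\cdots V_{io}\}$; stage $i$ of $f$ is the schema of all $g$ lying in steps $1,\dots,i$ simultaneously. For a schema $\gamma\subseteq\mathfrak B_\ell$, $F_\gamma$ is the random variable giving the value of $f$ at a string drawn uniformly from $\gamma$. The fitness signal of $\gamma$ is $S(\gamma)=\mathbf E[F_\gamma]-\mathbf E[F_{\mathfrak B_\ell}]$. *)

From HB Require Import structures.
From mathcomp Require Import all_boot all_order all_algebra.
Set Implicit Arguments. Unset Strict Implicit. Unset Printing Implicit Defensive.
Import Order.TTheory GRing.Theory Num.Theory.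
Local Open Scope ring_scope.

(* Binary strings of length l: g j is the j-th bit (0-based positions 'I_l). *)
Definition bstring (l : nat) := {ffun 'I_l -> bool}.

(* Row k of the descriptor (0-based): Xi_{L_k}(g) = V_k1 ... V_ko *)
Definition step_ok (h o l : nat) (L : 'M['I_l]_(h, o)) (V : 'M[bool]_(h, o))
  (k : 'I_h) (g : bstring l) : bool :=
  [forall j : 'I_o, g (L k j) == V k j].

Definition step_set (h o l : nat) (L : 'M['I_l]_(h, o)) (V : 'M[bool]_(h, o))
  (k : 'I_h) : {set bstring l} := [set g : bstring l | step_ok L V k g].

(* Stage i of f (paper's 1-based i): strings lying in steps 1..i,
   i.e. in the 0-based steps k with k < i. *)
Definition stage (h o l : nat) (L : 'M['I_l]_(h, o)) (V : 'M[bool]_(h, o))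
  (i : nat) : {set bstring l} :=
  [set g : bstring l | [forall k : 'I_h, (k < i)%N ==> step_ok L V k g]].

(* Deterministic increment accumulated by the loop of f on input g,
   processing the rows in the given order. *)
Fixpoint loop_incr (R : realFieldType) (h o l : nat) (delta : R)
  (L : 'M['I_l]_(h, o)) (V : 'M[bool]_(h, o)) (g : bstring l)
  (rows : seq 'I_h) : R :=
  match rows with
  | [::] => 0
  | k :: s => if step_ok L V k g then delta + loop_incr delta L V g s
              else - (delta / (2%:R ^+ o - 1))
  end.

(* Expected value of f at g: E[x] = 0 for x ~ N(0,1), plus the
   deterministic increment of the loop over rows 1..h in order. *)
Definition staircase_mean (R : realFieldType) (h o l : nat) (delta : R)
  (L : 'M['I_l]_(h, o)) (V : 'M[bool]_(h, o)) (g : bstring l) : R :=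
  0 + loop_incr delta L V g (enum 'I_h).

Definition schema_mean (R : realFieldType) (h o l : nat) (delta : R)
  (L : 'M['I_l]_(h, o)) (V : 'M[bool]_(h, o)) (gamma : {set bstring l}) : R :=
  (\sum_(g in gamma) staircase_mean delta L V g) / (#|gamma|%:R).

Definition fitness_signal (R : realFieldType) (h o l : nat) (delta : R)
  (L : 'M['I_l]_(h, o)) (V : 'M[bool]_(h, o)) (gamma : {set bstring l}) : R :=
  schema_mean delta L V gamma - schema_mean delta L V [set: bstring l].

Definition schema (l : nat) (D : {set 'I_l}) (c : bstring l) : {set bstring l} :=
  [set g : bstring l | [forall j in D, g j == c j]].

Definition schema_partition (l : nat) (D : {set 'I_l}) : {set {set bstring l}} :=
  [set schema D c | c : bstring l].

Definition rows_positions (h o l : nat) (L : 'M['I_l]_(h, o)) (i : nat)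
  : {set 'I_l} :=
  [set L k.1 k.2 | k : 'I_h * 'I_o & (k.1 < i)%N].

Definition descriptor_ok (R : realFieldType) (h o l : nat) (delta : R)
  (L : 'M['I_l]_(h, o)) : Prop :=
  (0 < h)%N /\ (0 < o)%N /\ (0 < l)%N /\ (h * o <= l)%N /\ 0 < delta /\
  injective (fun p : 'I_h * 'I_o => L p.1 p.2).

From HB Require Import structures.
From mathcomp Require Import all_boot all_order all_algebra.
Set Implicit Arguments. Unset Strict Implicit. Unset Printing Implicit Defensive.
Import Order.TTheory GRing.Theory Num.Theory.
Local Open Scope ring_scope.

(* Call a set of strings invariant under a set K of rows if flipping bits at
   positions of rows in K keeps it inside the set.  On such a set, flipping
   bits of a row k in K permutes the 2^o patterns of row k, so exactly a
   2^-o fraction of the set passes step k: these strings gain delta, the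
   (2^o - 1)-fold rest loses delta / (2^o - 1), and the passing strings form
   a set invariant under the other rows of K.  By induction the loop over
   the rows of K contributes nothing to the total of f over the set.  Over
   all strings this gives E[F_B] = 0; over stage i, which is invariant under
   the rows after i, it gives E[F_stage] = i delta.  The schemata of
   Lambda_i have equal sizes and partition the strings, so their means sum
   to 0, and removing the stage leaves - i delta. *)

Section Schemata.

Variable l : nat.

Definition flip (m g : bstring l) : bstring l := [ffun p => g p (+) m p].

Lemma flipK (m : bstring l) : involutive (flip m).
Proof. by move=> g; apply/ffunP=> p; rewrite !ffunE addbK. Qed.

Lemma card_le_flip (m : bstring l) (A B : {set bstring l}) :
  {in A, forall g, flip m g \in B} -> (#|A| <= #|B|)%N.
Proof.
move=> AB; rewrite -(card_imset _ (inv_inj (flipK m))).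
by apply/subset_leq_card/subsetP=> _ /imsetP[g gA ->]; apply: AB.
Qed.

Lemma mem_schema (D : {set 'I_l}) (c g : bstring l) :
  (g \in schema D c) = (schema D g == schema D c).
Proof.
apply/idP/eqP=> [|<-]; last by rewrite inE; apply/forall_inP.
rewrite inE => /forall_inP gc; apply/setP=> x; rewrite !inE.
apply/forall_inP/forall_inP=> xD j jD; rewrite (eqP (xD j jD)) ?gc //.
by rewrite eq_sym gc.
Qed.

Lemma card_schema (D : {set 'I_l}) (c c' : bstring l) :
  #|schema D c| = #|schema D c'|.
Proof.
suff le_card d d' : (#|schema D d| <= #|schema D d'|)%N.
  by apply/eqP; rewrite eqn_leq !le_card.
apply: (@card_le_flip [ffun p => (p \in D) && (d p != d' p)]) => g.
rewrite !inE => /forall_inP gd; apply/forall_inP=> j jD.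
by rewrite !ffunE jD (eqP (gd j jD)); case: (d j); case: (d' j).
Qed.

Lemma sum_schema_partition (M : nmodType) (D : {set 'I_l})
    (F : bstring l -> M) :
  \sum_(xi in schema_partition D) \sum_(g in xi) F g =
  \sum_(g in [set: bstring l]) F g.
Proof.
rewrite [RHS](partition_big (schema D) (mem (schema_partition D))) /=.
  apply: eq_bigr=> _ /imsetP[c _ ->]; apply: eq_bigl=> g.
  by rewrite in_setT mem_schema.
by move=> g _; apply/imsetP; exists g.
Qed.

End Schemata.

Section Staircase.

Variables (h o l : nat) (L : 'M['I_l]_(h, o)) (V : 'M[bool]_(h, o)).
Hypothesis L_inj : injective (fun p : 'I_h * 'I_o => L p.1 p.2).

Lemma eq_L k j k' j' : (L k j == L k' j') = (k == k') && (j == j').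
Proof.
apply/eqP/andP=> [Ekj | [/eqP-> /eqP->]] //.
by case: (@L_inj (k, j) (k', j') Ekj) => -> ->.
Qed.

Definition flip_invariant (K : pred 'I_h) (A : {set bstring l}) :=
  forall m : bstring l, (forall p, m p -> exists k j, K k /\ L k j = p) ->
  {in A, forall g, flip m g \in A}.

Lemma flip_invariantW (K K' : pred 'I_h) A :
  {subset K' <= K} -> flip_invariant K A -> flip_invariant K' A.
Proof.
move=> K'K invA m mK'; apply: invA => p /mK'[k [j [/K'K Kk Lkj]]].
by exists k, j.
Qed.

Lemma flip_invariantI K A B :
  flip_invariant K A -> flip_invariant K B -> flip_invariant K (A :&: B).
Proof.
move=> invA invB m mK g; rewrite !inE => /andP[gA gB].
by rewrite (invA m mK g gA) (invB m mK g gB).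
Qed.

Lemma flip_invariant_step (K : pred 'I_h) k :
  ~~ K k -> flip_invariant K (step_set L V k).
Proof.
move=> Kk m mK g; rewrite !inE => /forallP gk; apply/forallP=> j.
suff mkj : m (L k j) = false by rewrite ffunE mkj addbF gk.
apply/negbTE/negP=> /mK[k' [j' [Kk' /eqP]]].
rewrite eq_L => /andP[/eqP Ek _].
by move: Kk; rewrite -Ek Kk'.
Qed.

Lemma flip_invariant_stage (K : pred 'I_h) i :
  (forall k, K k -> i <= k)%N -> flip_invariant K (stage L V i).
Proof.
move=> K_ge m mK g gS; rewrite inE; apply/forallP=> k; apply/implyP=> ki.
have Kk : ~~ K k by apply: contraTN ki => /K_ge; rewrite -leqNgt.
have gk : g \in step_set L V k.
  by move: gS; rewrite !inE => /forallP/(_ k)/implyP; apply.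
by move: (flip_invariant_step Kk mK gk); rewrite inE.
Qed.

Definition row_pattern (k : 'I_h) (g : bstring l) : {ffun 'I_o -> bool} :=
  [ffun j => g (L k j)].

Lemma step_okE k g :
  step_ok L V k g = (row_pattern k g == [ffun j => V k j]).
Proof.
apply/forallP/eqP=> [gk | gk j].
  by apply/ffunP=> j; rewrite !ffunE; apply/eqP.
by move/ffunP/(_ j): gk; rewrite !ffunE => ->.
Qed.

Lemma card_row_pattern k A (v v' : {ffun 'I_o -> bool}) :
  flip_invariant (pred1 k) A ->
  #|[set g in A | row_pattern k g == v]| =
  #|[set g in A | row_pattern k g == v']|.
Proof.
move=> invA; suff le_card w w' :
    (#|[set g in A | row_pattern k g == w]| <=
     #|[set g in A | row_pattern k g == w']|)%N.
  by apply/eqP; rewrite eqn_leq !le_card.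
pose m : bstring l := [ffun p => [exists j, (L k j == p) && (w j != w' j)]].
have mk : forall p, m p -> exists k' j, k' == k /\ L k' j = p.
  by move=> p; rewrite ffunE => /existsP[j /andP[/eqP <- _]]; exists k, j.
apply: (card_le_flip (m := m)) => g; rewrite !inE => /andP[gA /eqP gw].
rewrite (invA m mk g gA); apply/eqP/ffunP=> j; rewrite !ffunE.
have -> : [exists j', (L k j' == L k j) && (w j' != w' j')] = (w j != w' j).
  apply/existsP/idP=> [[j' /andP[]] | ww]; last by exists j; rewrite eqxx.
  by rewrite eq_L eqxx => /eqP ->.
have -> : g (L k j) = w j by rewrite -gw ffunE.
by case: (w j); case: (w' j).
Qed.

Lemma card_flip_invariant_step k A :
  flip_invariant (pred1 k) A -> #|A| = (2 ^ o * #|A :&: step_set L V k|)%N.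
Proof.
move=> invA; rewrite -sum1_card (partition_big (row_pattern k) predT) //=.
rewrite (eq_bigr (fun=> #|A :&: step_set L V k|)) => [|v _].
  by rewrite sum_nat_const card_ffun card_bool card_ord.
have -> : #|A :&: step_set L V k| =
          #|[set g in A | row_pattern k g == [ffun j => V k j]]|.
  by apply: eq_card=> g; rewrite !inE step_okE.
rewrite (card_row_pattern _ v invA) -sum1_card.
by apply: eq_bigl=> g; rewrite inE.
Qed.

Variables (R : realFieldType) (delta : R).
Hypothesis o_gt0 : (0 < o)%N.

Lemma expr2n_sub1_neq0 : (2%:R ^+ o - 1 : R) != 0.
Proof.
rewrite subr_eq0 -natrX -[1]/(1%:R) eqr_nat -[1%N](expn0 2).
by rewrite eqn_exp2l // -lt0n.
Qed.

Lemma sum_loop_incr_cons k s A :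
  flip_invariant (pred1 k) A ->
  \sum_(g in A) loop_incr delta L V g (k :: s) =
  \sum_(g in A :&: step_set L V k) loop_incr delta L V g s.
Proof.
move=> invA; pose a := #|A :&: step_set L V k|.
have card_fail : #|A :\: step_set L V k|%:R = (2%:R ^+ o - 1) * (a%:R : R).
  have := cardsID (step_set L V k) A; rewrite (card_flip_invariant_step invA).
  move/(congr1 (fun n => n%:R : R)); rewrite natrD natrM natrX -/a => Ecard.
  by rewrite mulrBl mul1r -Ecard addrC addKr.
rewrite (big_setID (step_set L V k)) /=.
rewrite (eq_bigr (fun g => delta + loop_incr delta L V g s)); last first.
  by move=> g; rewrite !inE => /andP[_ ->].
rewrite [X in _ + X](eq_bigr (fun _ => - (delta / (2%:R ^+ o - 1))));
  last first.
  by move=> g; rewrite !inE => /andP[/negbTE -> _].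
rewrite big_split /= !sumr_const -/a.
have -> : - (delta / (2%:R ^+ o - 1)) *+ #|A :\: step_set L V k| =
          - (delta *+ a).
  rewrite -[_ *+ #|_|]mulr_natr card_fail mulNr mulrA.
  by rewrite divfK ?expr2n_sub1_neq0 ?mulr_natr.
by rewrite addrAC subrr add0r.
Qed.

Lemma sum_loop_incr_eq0 (s : seq 'I_h) A :
  uniq s -> flip_invariant (mem s) A ->
  \sum_(g in A) loop_incr delta L V g s = 0.
Proof.
elim: s A => [|k s IHs] A /=; first by move=> _ _; rewrite big1.
case/andP=> ks us invA.
have invAk : flip_invariant (pred1 k) A.
  by apply: flip_invariantW invA => k' /eqP ->; rewrite inE eqxx.
rewrite sum_loop_incr_cons // IHs //; apply: flip_invariantI.
  by apply: flip_invariantW invA => k' k's; rewrite inE k's orbT.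
exact: flip_invariant_step.
Qed.

Lemma loop_incr_cat g (s1 s2 : seq 'I_h) :
  all (step_ok L V ^~ g) s1 ->
  loop_incr delta L V g (s1 ++ s2) =
  delta *+ size s1 + loop_incr delta L V g s2.
Proof.
elim: s1 => [|k s1 IHs1] /=; first by rewrite add0r.
by case/andP=> -> /IHs1 ->; rewrite mulrS addrA.
Qed.

Lemma sum_staircase_mean :
  \sum_(g in [set: bstring l]) staircase_mean delta L V g = 0.
Proof.
under eq_bigr do rewrite /staircase_mean add0r.
apply: sum_loop_incr_eq0; first exact: enum_uniq.
by move=> m _ g _; rewrite in_setT.
Qed.

Lemma sum_staircase_mean_stage i : (i <= h)%N ->
  \sum_(g in stage L V i) staircase_mean delta L V g =
  (delta *+ i) *+ #|stage L V i|.
Proof.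
move=> ih; rewrite -sumr_const; apply/eqP; rewrite -subr_eq0 -sumrB; apply/eqP.
have mem_drop k : k \in drop i (enum 'I_h) -> (i <= k)%N.
  move/(map_f val); rewrite map_drop val_enum_ord drop_iota mem_iota.
  by case/andP.
transitivity
  (\sum_(g in stage L V i) loop_incr delta L V g (drop i (enum 'I_h))).
  apply: eq_bigr=> g; rewrite inE => /forallP gi.
  rewrite /staircase_mean add0r -{1}(cat_take_drop i (enum 'I_h)) loop_incr_cat.
    by rewrite size_takel ?size_enum_ord // addrC addKr.
  apply/allP=> k /(map_f val); rewrite map_take val_enum_ord take_iota mem_iota.
  by rewrite leq_min => /and3P[_ ki _]; apply: (implyP (gi k)).
apply: sum_loop_incr_eq0; first exact: drop_uniq (enum_uniq _).
exact: flip_invariant_stage.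
Qed.

Definition stage_pattern (i : nat) : bstring l :=
  [ffun p => [exists k : 'I_h, exists j : 'I_o,
               [&& (k < i)%N, L k j == p & V k j]]].

Lemma stage_patternE i (k : 'I_h) (j : 'I_o) :
  (k < i)%N -> stage_pattern i (L k j) = V k j.
Proof.
move=> ki; rewrite ffunE.
apply/existsP/idP=> [[k' /existsP[j' /and3P[_]]] | Vkj].
  by rewrite eq_L => /andP[/eqP-> /eqP->].
by exists k; apply/existsP; exists j; rewrite ki eqxx Vkj.
Qed.

Lemma stage_schema i :
  stage L V i = schema (rows_positions L i) (stage_pattern i).
Proof.
apply/setP=> g; rewrite !inE; apply/forallP/forall_inP=> [gi p | gi k].
  case/imsetP=> -[k j]; rewrite inE /= => ki ->.
  rewrite stage_patternE //; move/implyP/(_ ki)/forallP: (gi k); apply.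
apply/implyP=> ki; apply/forallP=> j; rewrite -(stage_patternE j ki).
by apply: gi; apply/imsetP; exists (k, j); rewrite ?inE.
Qed.

Lemma sum_schema_mean_partition (D : {set 'I_l}) :
  \sum_(xi in schema_partition D) schema_mean delta L V xi = 0.
Proof.
pose N := #|schema D [ffun=> false]|.
have card_xi xi : xi \in schema_partition D -> #|xi| = N.
  by case/imsetP=> c _ ->; apply: card_schema.
rewrite (eq_bigr (fun xi : {set bstring l} =>
                   (\sum_(g in xi) staircase_mean delta L V g) / N%:R));
  last first.
  by move=> xi /card_xi; rewrite /schema_mean => ->.
by rewrite -mulr_suml sum_schema_partition sum_staircase_mean mul0r.
Qed.

Lemma schema_mean_stage i : (i <= h)%N ->
  schema_mean delta L V (stage L V i) = delta *+ i.
Proof.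
move=> ih; rewrite /schema_mean sum_staircase_mean_stage //.
rewrite -[_ *+ #|_|]mulr_natr mulfK //.
rewrite pnatr_eq0 -lt0n card_gt0; apply/set0Pn; exists (stage_pattern i).
by rewrite stage_schema inE; apply/forall_inP.
Qed.

End Staircase.

Theorem mainTheorem4 (R : realFieldType) (h o l : nat) (delta : R)
  (L : 'M['I_l]_(h, o)) (V : 'M[bool]_(h, o)) (i : nat) :
  descriptor_ok delta L ->
  (1 <= i <= h)%N ->
  \sum_(xi in schema_partition (rows_positions L i) | xi != stage L V i)
      fitness_signal delta L V xi
  = - (i%:R * delta).
Proof.
move=> [_ [o_gt0 [_ [_ [_ L_inj]]]]] /andP[_ ih].
have mean_all : schema_mean delta L V [set: bstring l] = 0.
  by rewrite /schema_mean (sum_staircase_mean _ L_inj) ?mul0r.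
under eq_bigr do rewrite /fitness_signal mean_all subr0.
have := sum_schema_mean_partition V L_inj delta o_gt0 (rows_positions L i).
rewrite (bigD1 (stage L V i)) /=; last first.
  rewrite (stage_schema V L_inj).
  by apply/imsetP; exists (stage_pattern L V i).
move/eqP; rewrite addrC addr_eq0 => /eqP ->.
by rewrite schema_mean_stage // mulr_natl.
Qed.
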